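(* Let $\Sigma=\{a,b\}$ and let $A,B$ be positive integers. For $i$ in a finite index set $I$, let $Z_i=W_i+M_i\mathbb{N}^\Sigma$ be an $A,B$-frame. Let $v\in\mathbb{N}^\Sigma$. Then there exists $v'\in\mathbb{N}^\Sigma$ such that $\|v'\|=O\big((A+B)^{O(|I|)}\big)$ (with absolute implicit constants) and, for each $i\in I$, $v\in Z_i$ if and only if $v'\in Z_i$.
   Context: $[0..K]=\{0,1,\ldots,K\}$; $[0..B]^\Sigma_\Sigma$ is the set of $\Sigma\times\Sigma$ matrices with entries in $[0..B]$; for a matrix $M$ with columns $M^x$ and $\lambda\in\mathbb{N}^\Sigma$, $M\lambda=\sum_x\lambda_xM^x$, $M\mathbb{N}^\Sigma=\{M\lambda:\lambda\in\mathbb{N}^\Sigma\}$, and $W+X=\{w+x:w\in W,x\in X\}$. An $A,B$-frame is a set of the form $W+M\mathbb{N}^\Sigma$ with $W\subseteq[0..A]^\Sigma$ and $M\in[0..B]^\Sigma_\Sigma$. For $v\in\mathbb{Q}^\Sigma$, $\|v\|=\max_x|v(x)|$. *)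

From mathcomp Require Import all_boot all_order.
Set Implicit Arguments. Unset Strict Implicit. Unset Printing Implicit Defensive.

(* Alphabet Sigma = {a, b}, represented by 'I_2 (a = 0, b = 1). *)
Definition Sigma := 'I_2.

Definition vec := Sigma -> nat.

(* Sigma x Sigma matrices over nat; M y x is the entry in row y, column x,
   so the column M^x is (fun y => M y x). *)
Definition mat := Sigma -> Sigma -> nat.

Definition vnorm (v : vec) : nat := \max_(x : Sigma) v x.

Definition matvec (M : mat) (lam : vec) : vec :=
  fun y => \sum_(x : Sigma) lam x * M y x.

Definition in_frame (W : vec -> Prop) (M : mat) (v : vec) : Prop :=
  exists w, W w /\ exists lam : vec, forall y, v y = w y + matvec M lam y.

Definition is_AB_frame (A B : nat) (W : vec -> Prop) (M : mat) : Prop :=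
  (forall w, W w -> forall x, w x <= A) /\ (forall y x, M y x <= B).

(* Let P be the product of the nonzero entries and nonzero determinants of the matrices M_i,
   so P <= B^(6|I|). If v is large, pick u in [0..B]^Sigma: a column of some M_i to which v
   is almost parallel, or else a unit vector. Then P u is an integer combination of the
   columns of each M_i (by Cramer's rule, or directly when the columns are parallel), and
   since v is far from every column line not parallel to u, every representation of v (or
   of v - P u) in a frame has coefficients at least those of this combination. Hence
   subtracting P u preserves membership in all frames, and iterating brings v down to
   norm O(P (A+B)^3). *)

From Stdlib Require Import ZArith Lia Classical.
From mathcomp Require Import all_boot all_order zify.

Set Implicit Arguments.
Unset Strict Implicit.
Unset Printing Implicit Defensive.

Local Open Scope Z_scope.

Definition cross (a0 a1 b0 b1 : Z) : Z := a0 * b1 - a1 * b0.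

Lemma cross_bound A B a0 a1 b0 b1 :
  0 <= a0 <= A -> 0 <= a1 <= A -> 0 <= b0 <= B -> 0 <= b1 <= B ->
  Z.abs (cross a0 a1 b0 b1) <= A * B.
Proof. rewrite /cross; nia. Qed.

Lemma crossC a0 a1 b0 b1 : cross a0 a1 b0 b1 = - cross b0 b1 a0 a1.
Proof. by rewrite /cross; ring. Qed.

Lemma cross_swap a0 a1 b0 b1 : cross a1 a0 b1 b0 = - cross a0 a1 b0 b1.
Proof. by rewrite /cross; ring. Qed.

Definition in_frameZ (W : Z -> Z -> Prop) (c0 c1 d0 d1 x0 x1 : Z) : Prop :=
  exists w0 w1 l0 l1, [/\ W w0 w1, 0 <= l0, 0 <= l1,
    x0 = w0 + l0 * c0 + l1 * d0 & x1 = w1 + l0 * c1 + l1 * d1].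

Lemma in_frameZC W c0 c1 d0 d1 x0 x1 :
  in_frameZ W c0 c1 d0 d1 x0 x1 -> in_frameZ W d0 d1 c0 c1 x0 x1.
Proof.
case=> [w0 [w1 [l0 [l1 [Hw Hl0 Hl1 E0 E1]]]]].
by exists w0, w1, l1, l0; split=> //; lia.
Qed.

(* [l * D = E - F] is Cramer's rule for a frame coefficient [l] of a point with cross
   product [E] against the other column; a large [|E|] forces [l] to exceed the
   corresponding coefficient [mu] of a shift. *)
Lemma abs_shift_coeff_le A B P l mu D E F t :
  0 < P -> 0 <= l -> D <> 0 -> l * D = E - F -> Z.abs F <= A * B ->
  mu * D = P * t -> Z.abs t <= B * B -> (t = 0 \/ A * B + P * (B * B) < Z.abs E) ->
  Z.abs mu <= l.
Proof.
move=> HP Hl HD HlD HF HmD Ht [t0|HE].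
  by move: HmD; rewrite t0 Z.mul_0_r => /Z.mul_eq_0; lia.
have h1 : Z.abs mu * Z.abs D <= P * (B * B).
  by rewrite -Z.abs_mul HmD Z.abs_mul (Z.abs_eq P); nia.
have h2 : P * (B * B) < Z.abs l * Z.abs D by rewrite -Z.abs_mul HlD; lia.
nia.
Qed.

Definition transverse (gap u0 u1 c0 c1 x0 x1 : Z) : Prop :=
  (c0 <> 0 \/ c1 <> 0) -> cross u0 u1 c0 c1 <> 0 -> gap < Z.abs (cross x0 x1 c0 c1).

Lemma transverse_le g g' u0 u1 c0 c1 x0 x1 :
  g <= g' -> transverse g' u0 u1 c0 c1 x0 x1 -> transverse g u0 u1 c0 c1 x0 x1.
Proof. by move=> le T nz ne; have := T nz ne; lia. Qed.

Section ShiftInvariance.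
Variables (A B P : Z) (W : Z -> Z -> Prop).
Hypotheses (HP : 0 < P) (HW : forall w0 w1, W w0 w1 -> 0 <= w0 <= A /\ 0 <= w1 <= A).
Let gap := A * B + P * (B * B).

Lemma parallel_multiple c0 c1 u0 u1 :
  0 <= c0 <= B -> 0 <= c1 <= B -> 0 <= u0 <= B -> 0 <= u1 <= B ->
  (c0 <> 0 -> (c0 | P)) -> (c1 <> 0 -> (c1 | P)) ->
  c0 <> 0 \/ c1 <> 0 -> cross u0 u1 c0 c1 = 0 ->
  exists2 mu, 0 <= mu <= P * B & P * u0 = mu * c0 /\ P * u1 = mu * c1.
Proof.
rewrite /cross => Hc0 Hc1 Hu0 Hu1 D0 D1 [/[dup] nz /D0 [k Pk] | /[dup] nz /D1 [k Pk]] Hcr.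
- have k_pos : 0 < k by nia.
  exists (k * u0); first by split; nia.
  have := f_equal (Z.mul k) Hcr; rewrite Pk; split; lia.
- have k_pos : 0 < k by nia.
  exists (k * u1); first by split; nia.
  have := f_equal (Z.mul k) Hcr; rewrite Pk; split; lia.
Qed.

Lemma not_in_frameZ_parallel c0 c1 d0 d1 z0 z1 :
  0 <= c0 <= B -> 0 <= c1 <= B -> cross c0 c1 d0 d1 = 0 ->
  A * B < Z.abs (cross z0 z1 c0 c1) -> ~ in_frameZ W c0 c1 d0 d1 z0 z1.
Proof.
move=> Hc0 Hc1 HD Hz [w0 [w1 [l0 [l1 [/HW [Hw0 Hw1] _ _ E0 E1]]]]].
have : cross z0 z1 c0 c1 = cross w0 w1 c0 c1 - l1 * cross c0 c1 d0 d1.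
  by rewrite E0 E1 /cross; ring.
have := cross_bound Hw0 Hw1 Hc0 Hc1.
rewrite HD; lia.
Qed.

Lemma in_frameZ_sub_parallel c0 c1 d0 d1 u0 u1 w0 w1 l0 l1 x0 x1 :
  0 <= c0 <= B -> 0 <= c1 <= B -> 0 <= u0 <= B -> 0 <= u1 <= B ->
  (c0 <> 0 -> (c0 | P)) -> (c1 <> 0 -> (c1 | P)) ->
  (c0 <> 0 \/ c1 <> 0 -> cross u0 u1 c0 c1 = 0) ->
  W w0 w1 -> 0 <= l0 -> 0 <= l1 ->
  x0 = w0 + l0 * c0 + l1 * d0 -> x1 = w1 + l0 * c1 + l1 * d1 ->
  in_frameZ W c0 c1 d0 d1 (x0 - P * u0) (x1 - P * u1) \/
  l0 * c0 <= P * (B * B) /\ l0 * c1 <= P * (B * B).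
Proof.
move=> Hc0 Hc1 Hu0 Hu1 D0 D1 Hpar Hw Hl0 Hl1 E0 E1.
case: (classic (c0 <> 0 \/ c1 <> 0)) => [nz | z]; last by right; nia.
have [mu Hmu [Pu0 Pu1]] := parallel_multiple Hc0 Hc1 Hu0 Hu1 D0 D1 nz (Hpar nz).
case: (Z_le_gt_dec mu l0) => [le | gt]; last by right; nia.
by left; exists w0, w1, (l0 - mu), l1; split=> //; lia.
Qed.

Lemma in_frameZ_add_parallel c0 c1 d0 d1 u0 u1 y0 y1 :
  0 <= c0 <= B -> 0 <= c1 <= B -> 0 <= u0 <= B -> 0 <= u1 <= B ->
  (c0 <> 0 -> (c0 | P)) -> (c1 <> 0 -> (c1 | P)) ->
  c0 <> 0 \/ c1 <> 0 -> cross u0 u1 c0 c1 = 0 ->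
  in_frameZ W c0 c1 d0 d1 y0 y1 -> in_frameZ W c0 c1 d0 d1 (y0 + P * u0) (y1 + P * u1).
Proof.
move=> Hc0 Hc1 Hu0 Hu1 D0 D1 nz Hpar [w0 [w1 [l0 [l1 [Hw Hl0 Hl1 E0 E1]]]]].
have [mu Hmu [Pu0 Pu1]] := parallel_multiple Hc0 Hc1 Hu0 Hu1 D0 D1 nz Hpar.
by exists w0, w1, (l0 + mu), l1; split=> //; lia.
Qed.

Section Transverse.
Variables (c0 c1 d0 d1 u0 u1 x0 x1 y0 y1 : Z).
Hypotheses (Hc0 : 0 <= c0 <= B) (Hc1 : 0 <= c1 <= B) (Hd0 : 0 <= d0 <= B) (Hd1 : 0 <= d1 <= B)
  (Hu0 : 0 <= u0 <= B) (Hu1 : 0 <= u1 <= B).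
Hypotheses (Hx0 : x0 = y0 + P * u0) (Hx1 : x1 = y1 + P * u1).
Hypotheses (Txc : transverse gap u0 u1 c0 c1 x0 x1) (Tyc : transverse gap u0 u1 c0 c1 y0 y1)
  (Txd : transverse gap u0 u1 d0 d1 x0 x1) (Tyd : transverse gap u0 u1 d0 d1 y0 y1).

Lemma in_frameZ_shift_det_neq0 :
  cross c0 c1 d0 d1 <> 0 -> (cross c0 c1 d0 d1 | P) ->
  in_frameZ W c0 c1 d0 d1 x0 x1 <-> in_frameZ W c0 c1 d0 d1 y0 y1.
Proof.
move=> HD [q Hq].
have c_nz : c0 <> 0 \/ c1 <> 0.
  by case: (Z.eq_dec c0 0) => [e0|]; [right => e1; apply: HD; rewrite /cross e0 e1; ring | left].
have d_nz : d0 <> 0 \/ d1 <> 0.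
  by case: (Z.eq_dec d0 0) => [e0|]; [right => e1; apply: HD; rewrite /cross e0 e1; ring | left].
(* Cramer's rule: [P u = mu0 c + mu1 d] with integral [mu] since the determinant divides [P]. *)
set mu0 := q * cross u0 u1 d0 d1; set mu1 := q * cross c0 c1 u0 u1.
have Pu0 : P * u0 = mu0 * c0 + mu1 * d0 by rewrite Hq /mu0 /mu1 /cross; ring.
have Pu1 : P * u1 = mu0 * c1 + mu1 * d1 by rewrite Hq /mu0 /mu1 /cross; ring.
have mu0E : mu0 * cross c0 c1 d0 d1 = P * cross u0 u1 d0 d1 by rewrite /mu0 Hq; ring.
have mu1E : mu1 * cross c0 c1 d0 d1 = P * cross c0 c1 u0 u1 by rewrite /mu1 Hq; ring.
clearbody mu0 mu1.
have coeff_bound z0 z1 w0 w1 l0 l1 :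
    (cross u0 u1 c0 c1 <> 0 -> gap < Z.abs (cross z0 z1 c0 c1)) ->
    (cross u0 u1 d0 d1 <> 0 -> gap < Z.abs (cross z0 z1 d0 d1)) ->
    W w0 w1 -> 0 <= l0 -> 0 <= l1 ->
    z0 = w0 + l0 * c0 + l1 * d0 -> z1 = w1 + l0 * c1 + l1 * d1 ->
    Z.abs mu0 <= l0 /\ Z.abs mu1 <= l1.
  move=> Tc Td /HW [Hw0 Hw1] Hl0 Hl1 E0 E1; split.
  - apply: (@abs_shift_coeff_le A B P l0 mu0 (cross c0 c1 d0 d1)
             (cross z0 z1 d0 d1) (cross w0 w1 d0 d1) (cross u0 u1 d0 d1)) => //.
    + by rewrite E0 E1 /cross; ring.
    + exact: cross_bound.
    + exact: cross_bound.
    + by case: (Z.eq_dec (cross u0 u1 d0 d1) 0) => [|/Td]; [left | right].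
  - apply: (@abs_shift_coeff_le A B P l1 mu1 (cross c0 c1 d0 d1)
             (cross c0 c1 z0 z1) (cross c0 c1 w0 w1) (cross c0 c1 u0 u1)) => //.
    + by rewrite E0 E1 /cross; ring.
    + rewrite crossC Z.abs_opp; exact: cross_bound.
    + rewrite crossC Z.abs_opp; exact: cross_bound.
    + case: (Z.eq_dec (cross c0 c1 u0 u1) 0) => [|ne]; [by left | right].
      have /Tc : cross u0 u1 c0 c1 <> 0 by rewrite crossC; lia.
      by rewrite crossC Z.abs_opp.
split=> [[w0 [w1 [l0 [l1 [Hw Hl0 Hl1 E0 E1]]]]] | [w0 [w1 [l0 [l1 [Hw Hl0 Hl1 E0 E1]]]]]].
- have [b0 b1] := coeff_bound _ _ _ _ _ _ (Txc c_nz) (Txd d_nz) Hw Hl0 Hl1 E0 E1.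
  exists w0, w1, (l0 - mu0), (l1 - mu1); split=> //; lia.
- have [b0 b1] := coeff_bound _ _ _ _ _ _ (Tyc c_nz) (Tyd d_nz) Hw Hl0 Hl1 E0 E1.
  exists w0, w1, (l0 + mu0), (l1 + mu1); split=> //; lia.
Qed.

(* With parallel columns, a column not parallel to [u] keeps both [x] and [y] out of the
   frame; otherwise [P u] is a multiple of each nonzero column. *)
Lemma in_frameZ_shift_det_eq0 :
  (c0 <> 0 -> (c0 | P)) -> (c1 <> 0 -> (c1 | P)) ->
  (d0 <> 0 -> (d0 | P)) -> (d1 <> 0 -> (d1 | P)) ->
  cross c0 c1 d0 d1 = 0 ->
  A + 2 * (P * (B * B)) < x0 \/ A + 2 * (P * (B * B)) < x1 -> A < y0 \/ A < y1 ->
  in_frameZ W c0 c1 d0 d1 x0 x1 <-> in_frameZ W c0 c1 d0 d1 y0 y1.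
Proof.
move=> Dc0 Dc1 Dd0 Dd1 HD Bx By.
have gapAB : A * B <= gap by rewrite /gap; nia.
have HD' : cross d0 d1 c0 c1 = 0 by rewrite crossC HD.
case: (classic ((c0 <> 0 \/ c1 <> 0) /\ cross u0 u1 c0 c1 <> 0)) => [[nz ne] | Nc].
  have := Txc nz ne; have := Tyc nz ne => Hy Hx.
  by split=> /(not_in_frameZ_parallel Hc0 Hc1 HD); lia.
case: (classic ((d0 <> 0 \/ d1 <> 0) /\ cross u0 u1 d0 d1 <> 0)) => [[nz ne] | Nd].
  have := Txd nz ne; have := Tyd nz ne => Hy Hx.
  by split=> /in_frameZC /(not_in_frameZ_parallel Hd0 Hd1 HD'); lia.
have Pc : c0 <> 0 \/ c1 <> 0 -> cross u0 u1 c0 c1 = 0.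
  by move=> nz; apply: NNPP => ne; apply: Nc.
have Pd : d0 <> 0 \/ d1 <> 0 -> cross u0 u1 d0 d1 = 0.
  by move=> nz; apply: NNPP => ne; apply: Nd.
have [y0E y1E] : y0 = x0 - P * u0 /\ y1 = x1 - P * u1 by lia.
split=> [[w0 [w1 [l0 [l1 [Hw Hl0 Hl1 E0 E1]]]]] | Hy].
- have := in_frameZ_sub_parallel Hc0 Hc1 Hu0 Hu1 Dc0 Dc1 Pc Hw Hl0 Hl1 E0 E1.
  rewrite -y0E -y1E; case=> [// | [lc0 lc1]].
  have E0' : x0 = w0 + l1 * d0 + l0 * c0 by lia.
  have E1' : x1 = w1 + l1 * d1 + l0 * c1 by lia.
  have := in_frameZ_sub_parallel Hd0 Hd1 Hu0 Hu1 Dd0 Dd1 Pd Hw Hl1 Hl0 E0' E1'.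
  rewrite -y0E -y1E; case=> [/in_frameZC // | [ld0 ld1]].
  have [Hw0 Hw1] := HW Hw; lia.
- rewrite Hx0 Hx1.
  case: (classic (c0 <> 0 \/ c1 <> 0)) => [nz | zcoord].
    exact: in_frameZ_add_parallel Hc0 Hc1 Hu0 Hu1 Dc0 Dc1 nz (Pc nz) Hy.
  case: (classic (d0 <> 0 \/ d1 <> 0)) => [nz | zd].
    apply: in_frameZC.
    exact: in_frameZ_add_parallel Hd0 Hd1 Hu0 Hu1 Dd0 Dd1 nz (Pd nz) (in_frameZC Hy).
  case: Hy => [w0 [w1 [l0 [l1 [/HW [Hw0 Hw1] _ _ E0 E1]]]]].
  have [-> ->] : c0 = 0 /\ c1 = 0 by lia.
  have [-> ->] : d0 = 0 /\ d1 = 0 by lia.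
  lia.
Qed.

Lemma in_frameZ_shift :
  (c0 <> 0 -> (c0 | P)) -> (c1 <> 0 -> (c1 | P)) ->
  (d0 <> 0 -> (d0 | P)) -> (d1 <> 0 -> (d1 | P)) ->
  (cross c0 c1 d0 d1 <> 0 -> (cross c0 c1 d0 d1 | P)) ->
  A + 2 * (P * (B * B)) < x0 \/ A + 2 * (P * (B * B)) < x1 -> A < y0 \/ A < y1 ->
  in_frameZ W c0 c1 d0 d1 x0 x1 <-> in_frameZ W c0 c1 d0 d1 y0 y1.
Proof.
move=> Dc0 Dc1 Dd0 Dd1 DD Bx By.
case: (Z.eq_dec (cross c0 c1 d0 d1) 0) => [e | ne].
- exact: in_frameZ_shift_det_eq0.
- exact: in_frameZ_shift_det_neq0 (DD ne).
Qed.
End Transverse.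
End ShiftInvariance.

Lemma transverse_shift B P gap u0 u1 c0 c1 x0 x1 :
  0 <= P -> 0 <= u0 <= B -> 0 <= u1 <= B -> 0 <= c0 <= B -> 0 <= c1 <= B ->
  transverse (gap + P * (B * B)) u0 u1 c0 c1 x0 x1 ->
  transverse gap u0 u1 c0 c1 (x0 - P * u0) (x1 - P * u1).
Proof.
move=> HP Hu0 Hu1 Hc0 Hc1 T nz ne; have := T nz ne.
have : cross (x0 - P * u0) (x1 - P * u1) c0 c1 = cross x0 x1 c0 c1 - P * cross u0 u1 c0 c1.
  by rewrite /cross; ring.
have := cross_bound Hu0 Hu1 Hc0 Hc1.
have := Z.abs_mul P (cross u0 u1 c0 c1); rewrite (Z.abs_eq P) //; nia.
Qed.

Lemma transverse_of_near_parallel B K gap m0 m1 c0 c1 x0 x1 :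
  0 <= m0 <= B -> 0 <= m1 <= B -> 0 <= c0 <= B -> 0 <= c1 <= B -> 0 <= x0 -> 0 <= x1 ->
  Z.abs (cross m0 m1 x0 x1) <= K -> cross m0 m1 c0 c1 <> 0 ->
  (gap + K) * B < x0 \/ (gap + K) * B < x1 -> gap < Z.abs (cross x0 x1 c0 c1).
Proof.
move=> Hm0 Hm1 Hc0 Hc1 Hx0 Hx1 HK Hmc Hbig.
(* [cross m c * x = cross x c * m + cross m x * c], and [|cross m c| >= 1]. *)
have I0 : cross m0 m1 c0 c1 * x0 = cross x0 x1 c0 c1 * m0 + cross m0 m1 x0 x1 * c0.
  by rewrite /cross; ring.
have I1 : cross m0 m1 c0 c1 * x1 = cross x0 x1 c0 c1 * m1 + cross m0 m1 x0 x1 * c1.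
  by rewrite /cross; ring.
move: I0 I1 Hmc HK Hbig.
set e := cross m0 m1 c0 c1; set f := cross x0 x1 c0 c1; set g := cross m0 m1 x0 x1.
move=> I0 I1 He HK Hbig; apply/Z.nle_gt => Hf.
have le_abs z : 0 <= z -> z <= Z.abs (e * z) by move=> Hz; rewrite Z.abs_mul; nia.
have bnd a b : 0 <= a <= B -> 0 <= b <= B -> Z.abs (f * a + g * b) <= (gap + K) * B.
  move=> Ha Hb; rewrite Z.mul_add_distr_r.
  have : Z.abs (f * a) <= gap * B by rewrite Z.abs_mul; apply: Z.mul_le_mono_nonneg; lia.
  have : Z.abs (g * b) <= K * B by rewrite Z.abs_mul; apply: Z.mul_le_mono_nonneg; lia.
  lia.
case: Hbig => Hq.
- by have := le_abs _ Hx0; rewrite I0; have := bnd _ _ Hm0 Hc0; lia.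
- by have := le_abs _ Hx1; rewrite I1; have := bnd _ _ Hm1 Hc1; lia.
Qed.

Lemma scaled_le_of_near_parallel B P K m0 m1 x0 x1 :
  1 <= B -> 0 <= P -> 0 <= m0 <= B -> 0 <= m1 <= B -> 0 <= x1 ->
  Z.abs (cross m0 m1 x0 x1) <= K -> K + P * (B * B) + P * B < x0 ->
  P * m0 <= x0 /\ P * m1 <= x1.
Proof.
rewrite /cross => HB HP Hm0 Hm1 Hx1 HK Hx0.
have Pm0 : P * m0 <= P * B by apply: Z.mul_le_mono_nonneg_l; lia.
split; first by nia.
case: (Z.eq_dec m1 0) => [-> | nz]; first by lia.
(* [m0 x1 >= m1 x0 - K >= x0 - K] is large, so [x1] exceeds [P B]. *)
have : P * (B * B) + P * B < m0 * x1 by nia.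
have : m0 * x1 <= B * x1 by nia.
have : P * m1 <= P * B by apply: Z.mul_le_mono_nonneg_l; lia.
nia.
Qed.

Local Close Scope Z_scope.

Definition sa : Sigma := ord0.
Definition sb : Sigma := ord_max.

Lemma SigmaP (k : Sigma) : k = sa \/ k = sb.
Proof. by case: k => [[|[|n]] Hk]; [left; apply: val_inj | right; apply: val_inj | ]. Qed.

Lemma matvecE M lam y : matvec M lam y = lam sa * M y sa + lam sb * M y sb.
Proof. by rewrite /matvec big_ord_recl big_ord1; congr (_ + lam _ * M y _); apply: val_inj. Qed.

Lemma vnormE v : vnorm v = maxn (v sa) (v sb).
Proof. by rewrite /vnorm big_ord_recr big_ord1; congr (maxn (v _) _); apply: val_inj. Qed.

Definition zcoord (v : vec) (k : Sigma) : Z := Z.of_nat (v k).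
Definition col (M : mat) (j : Sigma) : vec := fun k => M k j.
Definition crossv (x y : vec) : Z := cross (zcoord x sa) (zcoord x sb) (zcoord y sa) (zcoord y sb).
Definition det (M : mat) : Z := crossv (col M sa) (col M sb).
Definition vtransverse (gap : nat) (u c x : vec) : Prop :=
  transverse (Z.of_nat gap) (zcoord u sa) (zcoord u sb) (zcoord c sa) (zcoord c sb) (zcoord x sa) (zcoord x sb).
Definition pointsZ (W : vec -> Prop) (w0 w1 : Z) : Prop :=
  exists2 w, W w & w0 = zcoord w sa /\ w1 = zcoord w sb.

Lemma in_frameE W M v : in_frame W M v <->
  in_frameZ (pointsZ W) (zcoord (col M sa) sa) (zcoord (col M sa) sb) (zcoord (col M sb) sa)
    (zcoord (col M sb) sb) (zcoord v sa) (zcoord v sb).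
Proof.
rewrite /zcoord /col; split.
- case=> w [Hw [lam Hv]].
  exists (zcoord w sa), (zcoord w sb), (Z.of_nat (lam sa)), (Z.of_nat (lam sb)).
  have := Hv sa; have := Hv sb; rewrite !matvecE /zcoord => E1 E0.
  by split; [exists w | lia ..].
- case=> w0 [w1 [l0 [l1 [[w Hw [-> ->]] Hl0 Hl1 E0 E1]]]].
  rewrite /zcoord -(Z2Nat.id l0 Hl0) -(Z2Nat.id l1 Hl1) in E0 E1.
  exists w; split=> //.
  exists (fun k => if k == sa then Z.to_nat l0 else Z.to_nat l1) => k.
  by rewrite matvecE; case: (SigmaP k) => ->; rewrite /=; lia.
Qed.

Definition shiftv (v u : vec) (P : nat) : vec := fun k => v k - P * u k.

Definition near_bound (A B P : nat) : nat := A * B + 2 * (P * (B * B)).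

Section FrameShift.
Variables (A B P : nat) (W : vec -> Prop) (M : mat).
Hypotheses (HF : is_AB_frame A B W M) (HB : 0 < B) (HP : 0 < P).
Hypothesis entry_dvd : forall j k, M k j <> 0 -> M k j %| P.
Hypothesis det_dvd : (det M <> 0 -> (det M | Z.of_nat P))%Z.

Lemma in_frame_shift (u v : vec) :
  (forall k, u k <= B) -> (forall k, P * u k <= v k) ->
  (forall j, vtransverse (near_bound A B P) u (col M j) v) ->
  (exists k, A + 2 * (P * (B * B)) < v k) ->
  in_frame W M v <-> in_frame W M (shiftv v u P).
Proof.
move=> Hu Hle Tv [k Hk]; have [HW HM] := HF.
have zshift l : zcoord (shiftv v u P) l = (zcoord v l - Z.of_nat P * zcoord u l)%Z.
  by rewrite /zcoord /shiftv; have := Hle l; lia.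
have col_bnd j l : (0 <= zcoord (col M j) l <= Z.of_nat B)%Z by rewrite /zcoord /col; have := HM l j; lia.
have u_bnd l : (0 <= zcoord u l <= Z.of_nat B)%Z by rewrite /zcoord; have := Hu l; lia.
have entry_dvdZ j l : zcoord (col M j) l <> 0%Z -> (zcoord (col M j) l | Z.of_nat P)%Z.
  rewrite /zcoord /col => nz; have /dvdnP [q ->] : M l j %| P by apply: entry_dvd; lia.
  by exists (Z.of_nat q); lia.
have Tx j : transverse (Z.of_nat A * Z.of_nat B + Z.of_nat P * (Z.of_nat B * Z.of_nat B))
              (zcoord u sa) (zcoord u sb) (zcoord (col M j) sa) (zcoord (col M j) sb) (zcoord v sa) (zcoord v sb).
  by apply: transverse_le (Tv j); rewrite /near_bound; lia.
have Ty j : transverse (Z.of_nat A * Z.of_nat B + Z.of_nat P * (Z.of_nat B * Z.of_nat B))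
              (zcoord u sa) (zcoord u sb) (zcoord (col M j) sa) (zcoord (col M j) sb)
              (zcoord v sa - Z.of_nat P * zcoord u sa) (zcoord v sb - Z.of_nat P * zcoord u sb).
  apply: transverse_shift; rewrite ?u_bnd ?col_bnd //; first lia.
  by apply: transverse_le (Tv j); rewrite /near_bound; lia.
rewrite !in_frameE !zshift.
apply: (@in_frameZ_shift (Z.of_nat A) (Z.of_nat B) (Z.of_nat P) _ _ _ _ _ _ _
         (zcoord u sa) (zcoord u sb)); rewrite ?Zplus_minus //;
  try exact: entry_dvdZ; try exact: Tx; try exact: Ty; try lia.
- move=> w0 w1 [w Hw [-> ->]]; rewrite /zcoord; have := HW w Hw sa; have := HW w Hw sb; lia.
- by case: (SigmaP k) Hk => -> Hk; [left | right]; rewrite /zcoord; lia.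
- have : P * u k <= P * B by rewrite leq_mul2l Hu orbT.
  have : P * B <= P * (B * B) by rewrite leq_mul2l leq_pmulr ?orbT.
  by case: (SigmaP k) Hk => -> Hk; [left | right]; rewrite /zcoord; lia.
Qed.
End FrameShift.

Definition unit_vec (k : Sigma) : vec := fun l => nat_of_bool (l == k).

Definition norm_bound (A B P : nat) : nat :=
  2 * near_bound A B P * B + near_bound A B P + A + 2 * (P * (B * B)) + P * B.

Section Descent.
Variables (A B : nat) (I : finType) (W : I -> vec -> Prop) (M : I -> mat) (P : nat).
Hypotheses (HF : forall i, is_AB_frame A B (W i) (M i)) (HB : 0 < B) (HP : 0 < P).
Hypothesis entry_dvd : forall i j k, M i k j <> 0 -> M i k j %| P.
Hypothesis det_dvd : forall i, (det (M i) <> 0 -> (det (M i) | Z.of_nat P))%Z.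

Local Notation K := (near_bound A B P).
Local Notation N := (norm_bound A B P).

Lemma shift_step (u v : vec) :
  (forall k, u k <= B) -> 0 < u sa + u sb -> (forall k, P * u k <= v k) ->
  (forall i j, vtransverse K u (col (M i) j) v) -> (exists k, N < v k) ->
  exists v', v' sa + v' sb < v sa + v sb /\
    forall i, in_frame (W i) (M i) v <-> in_frame (W i) (M i) v'.
Proof.
move=> Hu u_pos Hle T [k]; rewrite /norm_bound => Hk.
exists (shiftv v u P); split.
  have := Hle sa; have := Hle sb; rewrite /shiftv.
  have : 0 < P * u sa + P * u sb by rewrite -mulnDr muln_gt0 HP.
  lia.
move=> i; apply: in_frame_shift => //; [exact: entry_dvd | exact: det_dvd | exists k; lia].
Qed.

Lemma near_column_step (v : vec) i j k :
  (zcoord (col (M i) j) sa <> 0 \/ zcoord (col (M i) j) sb <> 0)%Z ->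
  (Z.abs (crossv (col (M i) j) v) <= Z.of_nat K)%Z -> N < v k ->
  exists v', v' sa + v' sb < v sa + v sb /\
    forall i, in_frame (W i) (M i) v <-> in_frame (W i) (M i) v'.
Proof.
rewrite /norm_bound; set m := col (M i) j; rewrite /crossv => nz near Hk.
have col_bnd i' j' l : (0 <= zcoord (col (M i') j') l <= Z.of_nat B)%Z.
  by rewrite /zcoord /col; have [_ HM] := HF i'; have := HM l j'; lia.
have m_bnd l : m l <= B by have [_ HM] := HF i; exact: HM.
have Pm_le l : P * m l <= v l.
  have := col_bnd i j sa; have := col_bnd i j sb; rewrite -/m /zcoord => m1 m0.
  suff : (Z.of_nat P * zcoord m sa <= zcoord v sa /\ Z.of_nat P * zcoord m sb <= zcoord v sb)%Z.
    by rewrite /zcoord => -[? ?]; case: (SigmaP l) => ->; lia.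
  have near' : (Z.abs (cross (zcoord m sb) (zcoord m sa) (zcoord v sb) (zcoord v sa)) <= Z.of_nat K)%Z.
    by rewrite cross_swap Z.abs_opp.
  case: (SigmaP k) Hk => -> Hk.
  - apply: (scaled_le_of_near_parallel (B := Z.of_nat B) _ _ _ _ _ near); rewrite /zcoord; lia.
  - have [] := scaled_le_of_near_parallel (B := Z.of_nat B) (P := Z.of_nat P) _ _ _ _ _ near';
      rewrite /zcoord; lia.
apply: (shift_step m_bnd _ Pm_le); last by exists k; rewrite /norm_bound.
  by move: nz; rewrite /zcoord; lia.
move=> i' j' nz' ne'.
apply: (transverse_of_near_parallel (B := Z.of_nat B) (K := Z.of_nat K)) near ne' _ => //;
  try exact: col_bnd; try exact: (col_bnd i j); try (rewrite /zcoord; lia).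
by case: (SigmaP k) Hk => -> Hk; [left | right]; rewrite /zcoord; lia.
Qed.

Lemma far_columns_step (v : vec) k :
  (forall i j, (zcoord (col (M i) j) sa <> 0 \/ zcoord (col (M i) j) sb <> 0)%Z ->
     (Z.of_nat K < Z.abs (crossv v (col (M i) j)))%Z) -> N < v k ->
  exists v', v' sa + v' sb < v sa + v sb /\
    forall i, in_frame (W i) (M i) v <-> in_frame (W i) (M i) v'.
Proof.
move=> far Hk; apply: (@shift_step (unit_vec k)); last by exists k.
- by move=> l; rewrite /unit_vec; case: (l == k).
- by rewrite /unit_vec; case: (SigmaP k) => ->.
- have : P <= P * B by rewrite leq_pmulr.
  by move: Hk; rewrite /norm_bound => Hk le_PPB l; rewrite /unit_vec; case: eqP => [-> | _]; lia.
- by move=> i j nz _; apply: far.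
Qed.

Lemma descent_step (v : vec) : (exists k, N < v k) ->
  exists v', v' sa + v' sb < v sa + v sb /\
    forall i, in_frame (W i) (M i) v <-> in_frame (W i) (M i) v'.
Proof.
move=> [k Hk].
case: (classic (exists i j, (zcoord (col (M i) j) sa <> 0 \/ zcoord (col (M i) j) sb <> 0)%Z /\
                 (Z.abs (crossv (col (M i) j) v) <= Z.of_nat K)%Z)) => [[i [j [nz near]]] | far].
  exact: near_column_step nz near Hk.
apply: (far_columns_step _ Hk) => i j nz; apply/Z.nle_gt => near.
by apply: far; exists i, j; rewrite /crossv crossC Z.abs_opp.
Qed.

Lemma descent (v : vec) : exists v', vnorm v' <= N /\
  forall i, in_frame (W i) (M i) v <-> in_frame (W i) (M i) v'.
Proof.
have [n] := ubnP (v sa + v sb); elim: n v => // n IHn v /ltnSE le_vn.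
case: (leqP (vnorm v) N) => [small | big]; first by exists v.
have [|v' [lt_v'v Hv']] := @descent_step v.
  by rewrite vnormE in big; case: (leqP (v sa) (v sb)) big; [exists sb | exists sa]; lia.
have [v'' [small Hv'']] := IHn v' (leq_trans lt_v'v le_vn).
by exists v''; split=> // i; rewrite Hv' Hv''.
Qed.
End Descent.

Section Modulus.
Variables (I : finType) (M : I -> mat).

(* The [maxn 1] guards make zero entries and singular matrices contribute the factor 1. *)
Definition frame_modulus : nat :=
  \prod_(i : I) (maxn 1 (Z.abs_nat (det (M i))) * \prod_(j : Sigma) \prod_(k : Sigma) maxn 1 (M i k j)).

Lemma dvdn_prod_factor (T : finType) (F : T -> nat) t : F t %| \prod_(s : T) F s.
Proof. by rewrite (bigD1 t) //= dvdn_mulr. Qed.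

Lemma frame_modulus_gt0 : 0 < frame_modulus.
Proof.
apply: prodn_gt0 => i; rewrite muln_gt0 leq_max leqnn /=.
by apply: prodn_gt0 => j; apply: prodn_gt0 => k; rewrite leq_max leqnn.
Qed.

Lemma entry_dvd_frame_modulus i j k : M i k j <> 0 -> M i k j %| frame_modulus.
Proof.
move=> nz; have -> : M i k j = maxn 1 (M i k j) by apply/esym/maxn_idPr; lia.
apply: dvdn_trans (dvdn_prod_factor (fun k => maxn 1 (M i k j)) k) _.
apply: dvdn_trans (dvdn_prod_factor (fun j => \prod_(k : Sigma) maxn 1 (M i k j)) j) _.
exact: dvdn_trans (dvdn_mull _ (dvdnn _)) (dvdn_prod_factor _ i).
Qed.

Lemma det_dvd_frame_modulus i : (det (M i) <> 0 -> (det (M i) | Z.of_nat frame_modulus))%Z.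
Proof.
move=> nz; apply/Z.divide_abs_l; rewrite -Nat2Z.inj_abs_nat.
have /dvdnP [q ->] : Z.abs_nat (det (M i)) %| frame_modulus.
  have -> : Z.abs_nat (det (M i)) = maxn 1 (Z.abs_nat (det (M i))) by apply/esym/maxn_idPr; lia.
  exact: dvdn_trans (dvdn_mulr _ (dvdnn _)) (dvdn_prod_factor _ i).
by exists (Z.of_nat q); lia.
Qed.

Lemma frame_modulus_le B : 0 < B -> (forall i j k, M i k j <= B) ->
  frame_modulus <= B ^ (6 * #|I|).
Proof.
move=> HB HM; rewrite expnM -prod_nat_const; apply: leq_prod => i _.
have -> : B ^ 6 = B * B * \prod_(j : Sigma) \prod_(k : Sigma) B.
  by rewrite !prod_nat_const !card_ord -expnM mulnn -expnD.
apply: leq_mul; last by apply: leq_prod => j _; apply: leq_prod => k _; rewrite geq_max HB HM.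
rewrite geq_max muln_gt0 HB /=.
have bnd j l : (0 <= zcoord (col (M i) j) l <= Z.of_nat B)%Z.
  by rewrite /zcoord /col; have := HM i j l; lia.
have := cross_bound (bnd sa sa) (bnd sa sb) (bnd sb sa) (bnd sb sb).
rewrite /det /crossv; lia.
Qed.
End Modulus.

Lemma norm_bound_le A B P : 0 < B -> 0 < P -> norm_bound A B P <= 13 * P * (A + B) ^ 3.
Proof.
move=> HB HP; rewrite /norm_bound /near_bound.
set X := A + B.
have [AX BX] : A <= X /\ B <= X by rewrite /X leq_addr leq_addl.
have X3 : X ^ 3 = X * X * X by rewrite !expnS expn0 muln1 mulnA.
have := leq_mul (leq_mul AX BX) BX; have := leq_mul (leq_mul BX BX) BX.
have := leq_mul AX BX; have := leq_mul BX BX.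
rewrite X3; nia.
Qed.

Theorem lemma4 :
  exists c d : nat,
  forall (A B : nat), 0 < A -> 0 < B ->
  forall (I : finType) (W : I -> vec -> Prop) (M : I -> mat),
    (forall i, is_AB_frame A B (W i) (M i)) ->
  forall v : vec,
  exists v' : vec,
    vnorm v' <= c * (A + B) ^ (d * #|I|) /\
    (forall i, in_frame (W i) (M i) v <-> in_frame (W i) (M i) v').
Proof.
exists 13, 9 => A B _ HB I W M HF v.
have [I0 | I_gt0] := posnP #|I|.
  exists (fun=> 0); split; first by rewrite vnormE.
  by move=> i; move: I0; rewrite (cardD1 i) inE.
have HP := frame_modulus_gt0 M.
have [v' [small Hv']] :=
  descent HF HB HP (@entry_dvd_frame_modulus _ M) (@det_dvd_frame_modulus _ M) v.
exists v'; split=> //; apply: leq_trans small (leq_trans (norm_bound_le A HB HP) _).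
have HM i j k : M i k j <= B by have [_] := HF i; apply.
have X_gt0 : 0 < A + B by rewrite addn_gt0 HB orbT.
rewrite -mulnA leq_mul2l /= mulnC; apply: (@leq_trans ((A + B) ^ 3 * (A + B) ^ (6 * #|I|))).
  rewrite leq_mul2l; apply/orP; right; apply: leq_trans (frame_modulus_le HB HM) _.
  by rewrite leq_exp2r ?leq_addl // muln_gt0.
rewrite -expnD; apply: leq_pexp2l => //; move: I_gt0; set n := #|I|; lia.
Qed.
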